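(* An algebra $(S,\sqcup,\cap)$ with two binary operations is an ado-semilattice if and only if: (1) $(S,\sqcup)$ is a left regular band; (2) $\cap$ is the semilattice meet with respect to the partial order $\leq$ given by $a\leq b$ iff $a\sqcup b=b$; (3) $a\sqcup(b\cap c)=(a\sqcup b)\cap(a\sqcup c)$ for all $a,b,c$; (4) $a\cap c\leq(a\cap b)\sqcup c$ for all $a,b,c$.
   Context: An o-semilattice is an algebra $(L,\cap,\sqcup)$ such that $(L,\cap)$ is a semilattice and, with $x\leq y$ iff $x=x\cap y$, for all $x,y,z$: (i) $x\leq x\sqcup y$; (ii) $(x\cap y)\sqcup(y\cap z)\leq y$; (iii) $x\sqcup y\leq x\sqcup(y\cap(x\sqcup y))$; (iv) $x\cap z\leq(x\cap y)\sqcup z$. It is distributive if $(a\cap d)\sqcup((b\cap d)\cap(c\cap d))=((a\cap d)\sqcup(b\cap d))\cap((a\cap d)\sqcup(c\cap d))$ for all $a,b,c,d$. An ado-semilattice is a distributive o-semilattice in which $\sqcup$ is associative. A left regular band is a set with a binary operation $\sqcup$ satisfying $a\sqcup(b\sqcup c)=(a\sqcup b)\sqcup c$, $a\sqcup a=a$, $a\sqcup b=(a\sqcup b)\sqcup a$; in a left regular band, $a\leq b$ iff $a\sqcup b=b$ defines a partial order. *)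

Set Implicit Arguments.

Section Defs.
Variable S : Type.
Variables (meet join : S -> S -> S).

Definition is_semilattice : Prop :=
  (forall x y z, meet x (meet y z) = meet (meet x y) z) /\
  (forall x y, meet x y = meet y x) /\
  (forall x, meet x x = x).

Definition meet_le (x y : S) : Prop := x = meet x y.

Definition is_o_semilattice : Prop :=
  is_semilattice /\
  (forall x y, meet_le x (join x y)) /\
  (forall x y z, meet_le (join (meet x y) (meet y z)) y) /\
  (forall x y, meet_le (join x y) (join x (meet y (join x y)))) /\
  (forall x y z, meet_le (meet x z) (join (meet x y) z)).

Definition is_distributive : Prop :=
  forall a b c d,
    join (meet a d) (meet (meet b d) (meet c d)) =
    meet (join (meet a d) (meet b d)) (join (meet a d) (meet c d)).

Definition is_ado_semilattice : Prop :=
  is_o_semilattice /\ is_distributive /\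
  (forall x y z, join x (join y z) = join (join x y) z).

Definition is_left_regular_band : Prop :=
  (forall a b c, join a (join b c) = join (join a b) c) /\
  (forall a, join a a = a) /\
  (forall a b, join a b = join (join a b) a).

Definition join_le (a b : S) : Prop := join a b = b.

Definition meet_is_glb : Prop :=
  forall a b,
    join_le (meet a b) a /\ join_le (meet a b) b /\
    (forall c, join_le c a -> join_le c b -> join_le c (meet a b)).
End Defs.

From Stdlib Require Import Setoid.

Set Implicit Arguments.

(* In an o-semilattice the meet order coincides with the band order
   (x <= y iff x ⊔ y = y), so conditions (1), (2) and (4) are the o-semilattice
   axioms read in the band order. The substance is left distributivity (3): for
   B = a ⊔ b and C = a ⊔ c, the distributivity axiom is applied at the upper
   bounds C and then B of a, where it reads a ⊔ (x ∩ d) ∩ (y ∩ d) =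
   (a ⊔ x ∩ d) ∩ (a ⊔ y ∩ d), and axiom (iii) gives a ⊔ (x ∩ (a ⊔ x)) = a ⊔ x.
   Conversely, (3) specialises to the distributivity axiom, and the remaining
   o-semilattice axioms follow from the band laws and (3), (4). *)

Section MeetOrder.
Variable S : Type.
Variable meet : S -> S -> S.
Hypothesis meetA : forall x y z, meet x (meet y z) = meet (meet x y) z.
Hypothesis meetC : forall x y, meet x y = meet y x.
Hypothesis meetxx : forall x, meet x x = x.

Local Notation le := (meet_le meet).

Lemma meet_le_refl x : le x x.
Proof. unfold meet_le. now rewrite meetxx. Qed.

Lemma meet_le_trans x y z : le x y -> le y z -> le x z.
Proof.
  unfold meet_le; intros Hxy Hyz.
  rewrite Hxy at 1. now rewrite Hyz, meetA, <- Hxy.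
Qed.

Lemma meet_le_antisym x y : le x y -> le y x -> x = y.
Proof. unfold meet_le; intros Hxy Hyx. now rewrite Hxy, meetC, <- Hyx. Qed.

Lemma meet_le_meetl x y : le (meet x y) x.
Proof. unfold meet_le. now rewrite (meetC _ x), meetA, meetxx. Qed.

Lemma meet_le_meetr x y : le (meet x y) y.
Proof. unfold meet_le. now rewrite <- meetA, meetxx. Qed.

Lemma meet_le_meet x y z : le x y -> le x z -> le x (meet y z).
Proof. unfold meet_le; intros Hxy Hxz. now rewrite meetA, <- Hxy. Qed.

Section OSemilattice.
Variable join : S -> S -> S.
Hypothesis join_ub : forall x y, meet_le meet x (join x y).
Hypothesis join_meet_le : forall x y z, meet_le meet (join (meet x y) (meet y z)) y.
Hypothesis join_le_join_meet :
  forall x y, meet_le meet (join x y) (join x (meet y (join x y))).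
Hypothesis meet_le_join_meet :
  forall x y z, meet_le meet (meet x z) (join (meet x y) z).
Hypothesis joinA : forall x y z, join x (join y z) = join (join x y) z.
Hypothesis distr : is_distributive meet join.

Lemma join_eq_of_meet_le x y : le x y -> join x y = y.
Proof.
  intro Hxy. apply meet_le_antisym.
  - pose proof (join_meet_le x y y) as H. now rewrite <- Hxy, meetxx in H.
  - pose proof (meet_le_join_meet y x y) as H. now rewrite meetxx, meetC, <- Hxy in H.
Qed.

Lemma meet_le_iff_join_le x y : le x y <-> join_le join x y.
Proof.
  unfold join_le; split.
  - apply join_eq_of_meet_le.
  - intros <-. apply join_ub.
Qed.

Lemma joinxx x : join x x = x.
Proof. apply join_eq_of_meet_le, meet_le_refl. Qed.

Lemma join_absorb_r x y : join (join x y) x = join x y.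
Proof.
  apply meet_le_antisym; [| apply join_ub].
  pose proof (join_meet_le (join x y) (join x y) x) as H.
  now rewrite meetxx, (meetC _ x), <- (join_ub x y) in H.
Qed.

Lemma meet_le_join2l x y z : le y z -> le (join x y) (join x z).
Proof.
  intro Hyz. apply meet_le_iff_join_le. unfold join_le.
  now rewrite joinA, join_absorb_r, <- joinA, (join_eq_of_meet_le Hyz).
Qed.

Lemma join_meet_join a x : join a (meet x (join a x)) = join a x.
Proof.
  apply meet_le_antisym; [| apply join_le_join_meet].
  apply meet_le_join2l, meet_le_meetl.
Qed.

Lemma distr_above a d x y : le a d ->
  join a (meet (meet x d) (meet y d)) = meet (join a (meet x d)) (join a (meet y d)).
Proof. intro Had. pose proof (distr a x y d) as D. now rewrite <- Had in D. Qed.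

Lemma meet_join_le_join_meet a B c :
  le a B -> le (meet B (join a c)) (join a (meet c B)).
Proof.
  intro HaB.
  assert (HaBC : le a (meet B (join a c)))
    by (apply meet_le_meet; [exact HaB | apply join_ub]).
  pose proof (distr_above B c (join_ub a c)) as D.
  rewrite (join_eq_of_meet_le HaBC), join_meet_join,
    <- (meetA B (join a c) (join a c)), meetxx in D.
  rewrite <- D. apply meet_le_join2l, meet_le_meet.
  - apply meet_le_trans with (meet c (join a c)); auto using meet_le_meetl, meet_le_meetr.
  - apply meet_le_trans with (meet B (join a c)); auto using meet_le_meetl.
Qed.

Lemma join_meet_distr_l a b c : join a (meet b c) = meet (join a b) (join a c).
Proof.
  apply meet_le_antisym.
  - apply meet_le_meet; apply meet_le_join2l; auto using meet_le_meetl, meet_le_meetr.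
  - pose proof (distr_above b c (join_ub a b)) as D.
    rewrite join_meet_join in D.
    apply meet_le_trans with (meet (join a b) (join a (meet c (join a b)))).
    + apply meet_le_meet; [apply meet_le_meetl |].
      apply meet_join_le_join_meet, join_ub.
    + rewrite <- D. apply meet_le_join2l, meet_le_meet.
      * apply meet_le_trans with (meet b (join a b)); auto using meet_le_meetl, meet_le_meetr.
      * apply meet_le_trans with (meet c (join a b)); auto using meet_le_meetl, meet_le_meetr.
Qed.

Lemma band_of_o_semilattice : is_left_regular_band join.
Proof.
  split; [exact joinA | split; [exact joinxx |]].
  intros x y. symmetry. apply join_absorb_r.
Qed.

Lemma meet_is_glb_of_o_semilattice : meet_is_glb meet join.
Proof.
  intros x y. rewrite <- !meet_le_iff_join_le. split; [| split].
  - apply meet_le_meetl.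
  - apply meet_le_meetr.
  - intro w. rewrite <- !meet_le_iff_join_le. apply meet_le_meet.
Qed.

End OSemilattice.

End MeetOrder.

Section LeftRegularBand.
Variable S : Type.
Variables meet join : S -> S -> S.
Hypothesis joinA : forall a b c, join a (join b c) = join (join a b) c.
Hypothesis joinxx : forall a, join a a = a.
Hypothesis join_regular : forall a b, join a b = join (join a b) a.
Hypothesis meet_glb : meet_is_glb meet join.

Local Notation le := (join_le join).

Lemma join_le_refl x : le x x.
Proof. apply joinxx. Qed.

Lemma join_le_trans x y z : le x y -> le y z -> le x z.
Proof. unfold join_le; intros Hxy Hyz. now rewrite <- Hyz, joinA, Hxy. Qed.

Lemma join_le_antisym x y : le x y -> le y x -> x = y.
Proof. unfold join_le; intros Hxy Hyx. now rewrite <- Hxy, join_regular, Hxy. Qed.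

Lemma join_le_meetl x y : le (meet x y) x.
Proof. apply meet_glb. Qed.

Lemma join_le_meetr x y : le (meet x y) y.
Proof. apply meet_glb. Qed.

Lemma join_le_meet_iff w x y : le w (meet x y) <-> le w x /\ le w y.
Proof.
  split.
  - intro Hw. split; eapply join_le_trans; eauto using join_le_meetl, join_le_meetr.
  - intros [Hx Hy]. now apply meet_glb.
Qed.

Lemma eq_of_join_le_iff x y : (forall w, le w x <-> le w y) -> x = y.
Proof.
  intro H. apply join_le_antisym; [apply H | apply <- H]; apply join_le_refl.
Qed.

Lemma semilattice_of_glb : is_semilattice meet.
Proof.
  split; [| split].
  - intros x y z. apply eq_of_join_le_iff. intro w.
    rewrite !join_le_meet_iff. tauto.
  - intros x y. apply eq_of_join_le_iff. intro w.
    rewrite !join_le_meet_iff. tauto.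
  - intros x. apply eq_of_join_le_iff. intro w.
    rewrite join_le_meet_iff. tauto.
Qed.

Lemma meet_le_iff_join_le_of_glb x y : meet_le meet x y <-> le x y.
Proof.
  unfold meet_le; split.
  - intro Hx. rewrite Hx. apply join_le_meetr.
  - intro Hxy. apply join_le_antisym.
    + apply meet_glb; [apply join_le_refl | exact Hxy].
    + apply join_le_meetl.
Qed.

Hypothesis join_meet_distr :
  forall a b c, join a (meet b c) = meet (join a b) (join a c).
Hypothesis band_le_join_meet : forall a b c, le (meet a c) (join (meet a b) c).

Lemma ado_semilattice_of_band : is_ado_semilattice meet join.
Proof.
  split; [| split; [intros a b c d; apply join_meet_distr | exact joinA]].
  split; [exact semilattice_of_glb |].
  repeat split; intros; apply meet_le_iff_join_le_of_glb.
  - unfold join_le. now rewrite joinA, joinxx.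
  - unfold join_le. rewrite <- joinA, (join_le_meetl y z). apply join_le_meetr.
  - rewrite join_meet_distr, joinA, joinxx. apply meet_glb; apply join_le_refl.
  - apply band_le_join_meet.
Qed.

End LeftRegularBand.

Theorem corollary3p3 (S : Type) (join meet : S -> S -> S) :
  is_ado_semilattice meet join <->
  (is_left_regular_band join /\
   meet_is_glb meet join /\
   (forall a b c, join a (meet b c) = meet (join a b) (join a c)) /\
   (forall a b c, join_le join (meet a c) (join (meet a b) c))).
Proof.
  split.
  - intros [[[meetA [meetC meetxx]] [join_ub [join_meet_le [join_le_join_meet
      meet_le_join_meet]]]] [distr joinA]].
    split; [| split; [| split]].
    + eapply band_of_o_semilattice; eauto.
    + eapply meet_is_glb_of_o_semilattice; eauto.
    + eapply join_meet_distr_l; eauto.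
    + intros a b c. eapply meet_le_iff_join_le; eauto.
  - intros [[? [? ?]] [? [? ?]]]. now apply ado_semilattice_of_band.
Qed.
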